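(* If $G_{\le t_c}$ is connected, then $$\sum_{t\le t_c}\sum_{i=1}^{m_t}\Delta_{t,i}^2\ge\frac{1}{2dmn}\|x(0)-\hat x\|_q^2,$$ where $q=d\mathbf 1$, $\hat x=\big(\frac1n\sum_ix_i(0)\big)\mathbf 1$, and $\|y\|_q^2=\sum_iq_iy_i^2$.
   Context: Expanding averaging system: - Each $G_t$ is a graph on $[n]$ with self-loops whose $0/1$ adjacency matrix $M_t$ has all row sums $d$. - Every component of $G_t$ has Cheeger constant at least $h$. - $G_t$ has $m_t\le m$ connected components. - The dynamics is $x(t+1)=\frac1dM_tx(t)$. $\Delta_{t,i}$ is the diameter $\max-\min$ of the positions $x_j(t)$ over the vertices $j$ of the $i$-th connected component of $G_t$. $G_{\le t}$ is the union of the edges of $G_0,\dots,G_t$. Let $t_1,\dots,t_c$ be the times $t>0$ at which $G_{\le t}$ has fewer connected components than $G_{\le t-1}$; if there are none, set $c=1$ and $t_c=0$. *)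

From HB Require Import structures.
From mathcomp Require Import all_boot all_order all_algebra.
Set Implicit Arguments.
Unset Strict Implicit.
Unset Printing Implicit Defensive.
Import Order.TTheory GRing.Theory Num.Theory.
Local Open Scope ring_scope.

Definition adjmx (R : pzRingType) (n : nat) (G : rel 'I_n) : 'M[R]_n :=
  \matrix_(i, j) (G i j)%:R.

Definition comp (n : nat) (G : rel 'I_n) (i : 'I_n) : {set 'I_n} :=
  [set j | connect G i j].
Definition comps (n : nat) (G : rel 'I_n) : {set {set 'I_n}} :=
  [set comp G i | i : 'I_n].
Definition ncomps (n : nat) (G : rel 'I_n) : nat := #|comps G|.

Definition union_upto (n : nat) (G : nat -> rel 'I_n) (t : nat) : rel 'I_n :=
  fun i j => [exists s : 'I_t.+1, G s i j].

Definition merge_time (n : nat) (G : nat -> rel 'I_n) (t : nat) : bool :=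
  (0 < t)%N && (ncomps (union_upto G t) < ncomps (union_upto G t.-1))%N.

Definition is_last_merge (n : nat) (G : nat -> rel 'I_n) (tc : nat) : Prop :=
  (merge_time G tc /\ forall t, merge_time G t -> (t <= tc)%N)
  \/ (tc = 0%N /\ forall t, ~~ merge_time G t).

(* Every component C of G has Cheeger constant (edge expansion)
   min_{S subset C, 0<|S|<=|C|/2} |E(S, C\S)| / |S|  at least h. *)
Definition cheeger_ge (R : realFieldType) (n : nat) (G : rel 'I_n) (h : R) : Prop :=
  forall C, C \in comps G ->
  forall S : {set 'I_n}, S \subset C -> (0 < #|S|)%N -> (2 * #|S| <= #|C|)%N ->
    h * (#|S|%:R) <=
    (#|[set p : 'I_n * 'I_n | [&& p.1 \in S, p.2 \in C :\: S & G p.1 p.2]]|)%:R.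

(* diameter max_{j in C} x_j - min_{j in C} x_j of the positions on C
   (written as the maximum of x_j - x_k over j,k in C; C is nonempty) *)
Definition diam (R : realFieldType) (n : nat) (x : 'I_n -> R) (C : {set 'I_n}) : R :=
  \big[Num.max/0]_(j in C) \big[Num.max/0]_(k in C) (x j - x k).

From Pilot Require Import Defs.
From HB Require Import structures.
From mathcomp Require Import all_boot all_order all_algebra.
From mathcomp Require Import ring lra.
Import Order.TTheory GRing.Theory Num.Theory.
Local Open Scope ring_scope.
Set Implicit Arguments.
Unset Strict Implicit.
Unset Printing Implicit Defensive.

(* Write D for the spread max x(0) - min x(0).  Every term of the left-hand side
   is at most d D^2, so it suffices to show D^2 <= 2m sum_t sum_i Delta_{t,i}^2.
   Averaging over a component moves no vertex across a threshold p unless the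
   component straddles p; as G_{<= t_c} is connected, every p in (min x(0), max x(0)]
   is therefore straddled by a component of some G_t with t <= t_c.  Select all
   components of G_0 and, at each later time, greedily those components that join
   two classes of G_{<= t-1}: at most m of them in total, and the first
   component straddling p is always selected.  The position ranges of the at most
   2m selected components thus cover (min x(0), max x(0)], so D is at most the sum
   of their diameters, and Cauchy-Schwarz concludes. *)

(* [comp] itself is shadowed by function composition. *)
Local Notation component := Pilot.Defs.comp.

Lemma sqr_sum_le_card_mul_sum_sqr (R : realFieldType) (I : finType) (A : {pred I})
    (a : I -> R) :
  (\sum_(i in A) a i) ^+ 2 <= #|A|%:R * \sum_(i in A) a i ^+ 2.
Proof.
set S := \sum_(i in A) a i; set Q := \sum_(i in A) a i ^+ 2.
have sum_sqr_diff : \sum_(i in A) \sum_(j in A) (a i - a j) ^+ 2 =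
    2%:R * (#|A|%:R * Q - S ^+ 2).
  transitivity (\sum_(i in A) (a i ^+ 2 * #|A|%:R + Q - 2%:R * a i * S)).
    apply: eq_bigr => i _.
    rewrite -sumr_const /Q /S !mulr_sumr -big_split -sumrB /=.
    by apply: eq_bigr => j _; rewrite mulr1; ring.
  rewrite sumrB big_split /= -mulr_suml -/Q sumr_const -mulr_suml -mulr_sumr -/S.
  rewrite -[_ *+ #|_|]mulr_natr; ring.
have : 0 <= 2%:R * (#|A|%:R * Q - S ^+ 2).
  rewrite -sum_sqr_diff; apply: sumr_ge0 => i _; apply: sumr_ge0 => j _.
  exact: sqr_ge0.
by rewrite pmulr_rge0 // subr_ge0.
Qed.

Lemma interval_cover_le_sum (R : realFieldType) (I : eqType) (s : seq I) (l r : I -> R)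
    (A B : R) :
  (forall k, k \in s -> l k <= r k) ->
  (forall p, A < p -> p <= B -> exists2 k, k \in s & l k < p <= r k) ->
  B - A <= \sum_(k <- s) (r k - l k).
Proof.
elim: {s}(size s) {-2}s (leqnn (size s)) B => [|N IH] s size_s B lr cover.
  move: size_s lr cover; rewrite leqn0 size_eq0 => /eqP -> _ cover.
  rewrite big_nil subr_le0 leNgt; apply/negP => AB.
  by have [k] := cover B AB (lexx B).
have [AB|BA] := ltP A B; last first.
  apply: le_trans (_ : 0 <= _); first by rewrite subr_le0.
  by rewrite big_seq; apply: sumr_ge0 => k ks; rewrite subr_ge0 lr.
have [k ks /andP[lkB Bk]] := cover B AB (lexx B).
rewrite (big_rem _ ks) /= -(subrKA (l k)) lerD ?lerB //.
apply: IH => [|k' /mem_rem|p Ap plk]; last 2 first.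
- exact: lr.
- have [k' k's /andP[lk'p pk']] := cover p Ap (le_trans plk (ltW lkB)).
  exists k'; last by rewrite lk'p.
  by apply: rem_mem k's; apply: contraTneq lk'p => ->; rewrite -leNgt.
by rewrite size_rem // -ltnS (leq_trans _ size_s) // prednK // lt0n size_eq0; case: (s) ks.
Qed.

Lemma sum_sqr_sub_mean_le (R : realFieldType) (n : nat) (f : 'I_n -> R) (lo hi : R) :
  (forall i, lo <= f i <= hi) ->
  \sum_(i < n) (f i - n%:R^-1 * \sum_(j < n) f j) ^+ 2 <= n%:R * (hi - lo) ^+ 2.
Proof.
case: n f => [|n] f f_in; first by rewrite big_ord0 mul0r.
set mean := _ * _.
have n_pos : (0 : R) < n.+1%:R by rewrite ltr0n.
have sum_const c : \sum_(i < n.+1) c = n.+1%:R * c :> R.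
  by rewrite sumr_const card_ord mulr_natl.
have lo_mean : lo <= mean.
  rewrite ler_pdivlMl // -sum_const.
  by apply: ler_sum => j _; case/andP: (f_in j).
have mean_hi : mean <= hi.
  rewrite ler_pdivrMl // -sum_const.
  by apply: ler_sum => j _; case/andP: (f_in j).
rewrite -sum_const; apply: ler_sum => i _.
by case/andP: (f_in i) => lo_fi fi_hi; nra.
Qed.

Section Components.

Variable n : nat.
Implicit Types (e : rel 'I_n) (C : {set 'I_n}).

Lemma comps_subrel e (e' : rel 'I_n) : subrel e e' ->
  comps e' = (fun C => [set j | [exists i in C, connect e' i j]]) @: comps e.
Proof.
move=> ee'; rewrite /comps -imset_comp; apply: eq_imset => i /=.
apply/setP => j; rewrite !inE; apply/idP/existsP => [ij|[k /andP[]]].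
  by exists i; rewrite inE connect0 ij.
rewrite inE => ik kj; apply: connect_trans kj.
by apply: connect_sub ik => x y /ee' /connect1.
Qed.

Lemma ncomps_subrel e (e' : rel 'I_n) : subrel e e' -> (ncomps e' <= ncomps e)%N.
Proof. by move=> ee'; rewrite /ncomps (comps_subrel ee'); apply: leq_imset_card. Qed.

Lemma ncomps_subrel_lt e (e' : rel 'I_n) i j : symmetric e' -> subrel e e' ->
  connect e' i j -> ~~ connect e i j -> (ncomps e' < ncomps e)%N.
Proof.
move=> se' ee' e'ij eij; rewrite /ncomps (comps_subrel ee').
rewrite ltn_neqAle leq_imset_card andbT; apply/negP => /imset_injP inj.
have sub' k l : connect e k l -> connect e' k l.
  by apply: connect_sub => x y /ee' /connect1.
have : component e i = component e j.
  apply: inj; rewrite ?imset_f //; apply/setP => k; rewrite !inE.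
  apply/existsP/existsP => -[l /andP[]]; rewrite inE => /sub' e'l e'lk.
    exists j; rewrite inE connect0 /=; apply: connect_trans e'lk.
    by apply: connect_trans e'l; rewrite sym_connect_sym.
  by exists i; rewrite inE connect0 /=; apply: connect_trans e'lk; apply: connect_trans e'l.
by move/setP/(_ j); rewrite !inE connect0 (negbTE eij).
Qed.

Lemma connect_restrict e C i j :
  (forall u v, e u v -> u \in C -> v \in C) -> i \in C -> connect e i j ->
  connect (fun u v => [&& e u v, u \in C & v \in C]) i j.
Proof.
move=> eC iC /connectP[p pp ->]; elim: p i iC pp => //= y p IHp i iC /andP[eiy py].
have yC := eC _ _ eiy iC.
by apply: connect_trans (IHp _ yC py); apply: connect1; rewrite eiy iC yC.
Qed.

Lemma union_upto_sym (G : nat -> rel 'I_n) s :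
  (forall t, symmetric (G t)) -> symmetric (union_upto G s).
Proof. by move=> sG i j; apply/existsP/existsP => -[t]; exists t; rewrite sG. Qed.

End Components.

Section Selection.

Variables (n : nat) (G : nat -> rel 'I_n).
Hypothesis sG : forall t, symmetric (G t).

(* The components of G_s, s > 0, are scanned in the order of [enum (comps (G s))];
   the k-th one is selected when it joins two vertices that are not connected by
   G_{<= s-1} together with the components scanned before it. *)
Definition greedy_union (s k : nat) : rel 'I_n := fun i j =>
  union_upto G s.-1 i j ||
  has (fun C : {set 'I_n} => [&& G s i j, i \in C & j \in C]) (take k (enum (comps (G s)))).

Definition greedy_merges (s k : nat) : bool :=
  let C := nth set0 (enum (comps (G s))) k in
  [exists i in C, exists j in C, ~~ connect (greedy_union s k) i j].

Definition selected (t : nat) (C : {set 'I_n}) : bool :=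
  (t == 0%N) || greedy_merges t (index C (enum (comps (G t)))).

Lemma greedy_union_sym s k : symmetric (greedy_union s k).
Proof.
move=> i j; rewrite /greedy_union union_upto_sym //; congr (_ || _).
by apply: eq_has => C; rewrite sG; case: (i \in C); case: (j \in C).
Qed.

Lemma greedy_merges_step s k : (k < size (enum (comps (G s))))%N ->
  (greedy_merges s k + ncomps (greedy_union s k.+1) <= ncomps (greedy_union s k))%N.
Proof.
move=> ks; set e := enum (comps (G s)).
have sub : subrel (greedy_union s k) (greedy_union s k.+1).
  move=> i j; rewrite /greedy_union => /orP[-> //|H]; apply/orP; right.
  by rewrite -addn1 takeD has_cat H.
case M : (greedy_merges s k); last by rewrite add0n; apply: ncomps_subrel.
rewrite add1n; move: M; rewrite /greedy_merges -/e.
set C := nth set0 e k => /existsP[i /andP[iC /existsP[j /andP[jC nij]]]].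
apply: (ncomps_subrel_lt (i := i) (j := j)) => //; first exact: greedy_union_sym.
have /imsetP[c _ Cc] : C \in comps (G s) by rewrite -mem_enum mem_nth.
have closedC u v : G s u v -> u \in C -> v \in C.
  by rewrite Cc !inE => Guv cu; apply: connect_trans cu (connect1 Guv).
have Gij : connect (G s) i j.
  move: iC jC; rewrite Cc !inE => ci cj; apply: connect_trans cj.
  by rewrite sym_connect_sym.
apply: connect_sub (connect_restrict closedC iC Gij) => u v /and3P[Guv uC vC].
apply: connect1; apply/orP; right; rewrite -addn1 takeD has_cat; apply/orP; right.
by rewrite (drop_nth set0 ks) /= -/C Guv uC vC.
Qed.

Lemma selected_count_step s : (0 < s)%N ->
  (\sum_(C in comps (G s) | selected s C) 1 + ncomps (union_upto G s)
     <= ncomps (union_upto G s.-1))%N.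
Proof.
move=> s_gt0; set e := enum (comps (G s)).
have -> : (\sum_(C in comps (G s) | selected s C) 1 =
          \sum_(0 <= k < size e) (greedy_merges s k : nat))%N.
  rewrite big_mkcondr -big_enum -/e (big_nth set0) /= big_mkcond /=.
  apply: eq_big_nat => k /andP[_ ks].
  by rewrite /selected eqn0Ngt s_gt0 /= -/e index_uniq ?enum_uniq //; case: greedy_merges.
have scan k : (k <= size e)%N ->
    (\sum_(0 <= k' < k) (greedy_merges s k' : nat) + ncomps (greedy_union s k)
       <= ncomps (greedy_union s 0))%N.
  elim: k => [|k IH] ks; first by rewrite big_nil.
  rewrite big_nat_recr //= -addnA; apply: leq_trans (IH (ltnW ks)).
  by rewrite leq_add2l; apply: greedy_merges_step.
apply: leq_trans (leq_trans (scan _ (leqnn _)) _).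
  rewrite leq_add2l; apply: ncomps_subrel => i j /orP[|].
    case: s s_gt0 {e scan} => // s _ /= /existsP[t Gt].
    by apply/existsP; exists (widen_ord (leqnSn _) t).
  by case/hasP => C _ /and3P[Gij _ _]; apply/existsP; exists ord_max.
by apply: ncomps_subrel => i j ij; rewrite /greedy_union ij.
Qed.

Lemma selected_count tc :
  (\sum_(1 <= s < tc.+1) \sum_(C in comps (G s) | selected s C) 1
     + ncomps (union_upto G tc) <= ncomps (union_upto G 0))%N.
Proof.
elim: tc => [|tc IH]; first by rewrite big_geq.
rewrite big_nat_recr //= -addnA; apply: leq_trans IH; rewrite leq_add2l.
exact: selected_count_step.
Qed.

Definition selected_pairs (tc : nat) : {set 'I_tc.+1 * {set 'I_n}} :=
  [set k : 'I_tc.+1 * {set 'I_n} | (k.2 \in comps (G k.1)) && selected k.1 k.2].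

Lemma big_selected_pairs (T : Type) (idx : T) (op : Monoid.com_law idx) tc
    (F : 'I_tc.+1 -> {set 'I_n} -> T) :
  \big[op/idx]_(k in selected_pairs tc) F k.1 k.2 =
  \big[op/idx]_(t < tc.+1) \big[op/idx]_(C in comps (G t) | selected t C) F t C.
Proof. by rewrite pair_big_dep; apply: eq_bigl => k; rewrite inE. Qed.

Lemma sum_selected_pairs_le (R : numDomainType) tc (F : 'I_tc.+1 -> {set 'I_n} -> R) :
  (forall t C, 0 <= F t C) ->
  \sum_(k in selected_pairs tc) F k.1 k.2 <= \sum_(t < tc.+1) \sum_(C in comps (G t)) F t C.
Proof.
move=> F_ge0; rewrite big_selected_pairs; apply: ler_sum => t _.
by rewrite big_mkcondr /=; apply: ler_sum => C _; case: selected.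
Qed.

Lemma card_selected_pairs tc : (#|selected_pairs tc| <= 2 * ncomps (G 0))%N.
Proof.
rewrite -sum1_card (big_selected_pairs _ (fun _ _ => 1%N)) big_ord_recl /= mul2n -addnn.
have -> : (\sum_(C in comps (G 0) | selected 0 C) 1 = ncomps (G 0))%N.
  by rewrite /ncomps -sum1_card; apply: eq_bigl => C; rewrite /selected andbT.
rewrite leq_add2l; apply: leq_trans (ncomps_subrel (e' := union_upto G 0) _); last first.
  by move=> i j Gij; apply/existsP; exists (ord0 : 'I_1).
apply: leq_trans (selected_count tc); rewrite big_add1 big_mkord.
exact: leq_addr.
Qed.

End Selection.

Section Straddling.

Variables (R : realFieldType) (n : nat).
Implicit Types (f : 'I_n -> R) (C : {set 'I_n}).

Definition straddles f (p : R) C : bool :=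
  [exists i in C, exists j in C, (f i < p) && (p <= f j)].

(* The default [c] only matters for the empty set. *)
Definition max_over f (c : 'I_n) C : R :=
  \big[Num.max/f (odflt c [pick j in C])]_(j in C) f j.

Lemma diam_ge0 f C : 0 <= diam f C.
Proof. exact: bigmax_ge_id. Qed.

Lemma sub_le_diam f C i j : i \in C -> j \in C -> f i - f j <= diam f C.
Proof.
by move=> iC jC; apply: le_trans (le_bigmax_cond _ _ iC); apply: (le_bigmax_cond _ _ jC).
Qed.

Lemma max_over_mem f c C i : i \in C -> exists2 j, j \in C & max_over f c C = f j.
Proof.
move=> iC; have cC : odflt c [pick j in C] \in C by case: pickP => // /(_ i); rewrite iC.
apply: (big_ind (fun v => exists2 j, j \in C & v = f j)) => [|u v [j jC ->] [k kC ->]|k kC].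
- by exists (odflt c [pick j in C]).
- by case: (leP (f j) (f k)) => _; [exists k | exists j].
- by exists k.
Qed.

Lemma straddles_max_over f c p C :
  straddles f p C -> max_over f c C - diam f C < p <= max_over f c C.
Proof.
case/existsP=> i /andP[iC /existsP[j /andP[jC /andP[fip pfj]]]].
rewrite (le_trans pfj (le_bigmax_cond _ _ jC)) andbT.
have [k kC ->] := max_over_mem f c iC.
by have := sub_le_diam f kC iC; lra.
Qed.

Lemma side_eq_of_not_straddles f p C u v :
  ~~ straddles f p C -> u \in C -> v \in C -> (f u < p) = (f v < p).
Proof.
move=> nS uC vC; apply/eqP; apply: contraNT nS => side_uv; apply/existsP.
case: (ltP (f u) p) side_uv => fu; case: (ltP (f v) p) => fv //= _.
  by exists u; rewrite uC; apply/existsP; exists v; rewrite vC fu fv.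
by exists v; rewrite vC; apply/existsP; exists u; rewrite uC fv fu.
Qed.

Lemma side_eq_of_no_straddle (A : rel 'I_n) f p u v :
  ~~ [exists C in comps A, straddles f p C] -> A u v -> (f u < p) = (f v < p).
Proof.
move=> nS Auv; apply: (@side_eq_of_not_straddles _ _ (component A u)).
- by apply: contra nS => SC; apply/existsP; exists (component A u); rewrite imset_f.
- by rewrite inE connect0.
- by rewrite inE connect1.
Qed.

End Straddling.

Lemma average_side (R : realFieldType) (n d : nat) (A : rel 'I_n) (x : 'cV[R]_n) (p : R) :
  reflexive A -> (forall i, \sum_(j < n) adjmx R A i j = d%:R) ->
  (forall u v, A u v -> (x u 0 < p) = (x v 0 < p)) ->
  forall j, ((d%:R^-1 *: (adjmx R A *m x)) j 0 < p) = (x j 0 < p).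
Proof.
move=> rA regA sideA j.
have dE : d%:R = \sum_(k < n) (A j k)%:R :> R.
  by rewrite -(regA j); apply: eq_bigr => k _; rewrite mxE.
have d_gt0 : (0 : R) < d%:R.
  by rewrite dE (bigD1 j) //= rA ltr_pwDl //; apply: sumr_ge0 => k _; apply: ler0n.
have avg : (d%:R^-1 *: (adjmx R A *m x)) j 0 - p =
    d%:R^-1 * \sum_(k < n) (A j k)%:R * (x k 0 - p).
  rewrite !mxE; apply: (@mulfI _ d%:R); first by rewrite gt_eqF.
  rewrite mulrBr !mulrA divff ?gt_eqF // !mul1r.
  rewrite dE mulr_suml -sumrB; apply: eq_bigr => k _; rewrite mxE; ring.
rewrite -subr_lt0 avg pmulr_rlt0 ?invr_gt0 //.
have [xj|xj] := ltP (x j 0) p.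
  rewrite (bigD1 j) //= rA mul1r ltr_nwDl ?subr_lt0 //.
  apply: sumr_le0 => k _; case Ajk: (A j k); last by rewrite mul0r.
  by rewrite mul1r subr_le0 ltW // -(sideA _ _ Ajk).
apply/negbTE; rewrite -leNgt; apply: sumr_ge0 => k _.
case Ajk: (A j k); last by rewrite mul0r.
by rewrite mul1r subr_ge0 leNgt -(sideA _ _ Ajk) -leNgt.
Qed.

Section Trajectory.

Variables (R : realFieldType) (n d : nat) (G : nat -> rel 'I_n) (x : nat -> 'cV[R]_n).
Hypotheses (sG : forall t, symmetric (G t)) (rG : forall t, reflexive (G t))
  (regG : forall t i, \sum_(j < n) adjmx R (G t) i j = d%:R)
  (step : forall t, x t.+1 = d%:R^-1 *: (adjmx R (G t) *m x t)).

Local Notation pos t := (fun i => x t i 0).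

Definition straddled (p : R) (t : nat) : bool :=
  [exists C in comps (G t), straddles (pos t) p C].

Lemma side_stable p t : (forall s, (s < t)%N -> ~~ straddled p s) ->
  forall s, (s <= t)%N -> forall j, (x s j 0 < p) = (x 0%N j 0 < p).
Proof.
move=> nS; elim=> [|s IH] st j //.
rewrite step average_side ?IH ?(ltnW st) // => u v.
exact: side_eq_of_no_straddle (nS s st).
Qed.

Lemma straddled_before p tc a b :
  (forall i j, connect (union_upto G tc) i j) -> x 0%N a 0 < p <= x 0%N b 0 ->
  exists t, (t <= tc)%N && straddled p t.
Proof.
move=> conn /andP[pa pb].
suff [t St] : exists t : 'I_tc.+1, straddled p t by exists t; rewrite -ltnS ltn_ord St.
apply/existsP; apply: contraT => /existsPn nS.
have side s : (s <= tc)%N -> forall j, (x s j 0 < p) = (x 0%N j 0 < p).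
  by apply: (side_stable (t := tc)) => s' s'_lt; apply: (nS (Ordinal (leqW s'_lt))).
have side_ab : (x 0%N a 0 < p) = (x 0%N b 0 < p).
  apply: (closed_connect (a := fun j => x 0%N j 0 < p)) (conn a b) => u v /existsP[s Gs].
  rewrite !unfold_in /= -!(side s (ltn_ord s)); exact: side_eq_of_no_straddle (nS s) Gs.
by move: side_ab; rewrite pa => /esym bp; have := lt_le_trans bp pb; rewrite ltxx.
Qed.

Lemma greedy_union_side p t k : (0 < t)%N ->
  (forall s, (s < t)%N -> ~~ straddled p s) ->
  (forall C, C \in take k (enum (comps (G t))) -> ~~ straddles (pos t) p C) ->
  forall u v, greedy_union G t k u v -> (x t u 0 < p) = (x t v 0 < p).
Proof.
move=> t_gt0 nS nSC u v /orP[/existsP[s Gs]|/hasP[C CS /and3P[_ uC vC]]].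
  have s_lt : (s < t)%N by apply: leq_trans (ltn_ord s) _; rewrite prednK.
  have side := side_stable nS.
  rewrite !(side t (leqnn t)) -!(side s (ltnW s_lt)).
  exact: side_eq_of_no_straddle (nS s s_lt) Gs.
exact: side_eq_of_not_straddles (nSC C CS) uC vC.
Qed.

Lemma first_straddle_selected p t :
  (forall s, (s < t)%N -> ~~ straddled p s) -> straddled p t ->
  exists2 C, C \in comps (G t) & selected G t C && straddles (pos t) p C.
Proof.
move=> nS St; have [t0 | t_gt0] := posnP t.
  by case/existsP: St => C /andP[CG SC]; exists C; rewrite // SC /selected t0.
set e := enum (comps (G t)).
have exk : exists k, (k < size e)%N && straddles (pos t) p (nth set0 e k).
  case/existsP: St => C /andP[CG SC]; exists (index C e).
  by rewrite index_mem nth_index ?mem_enum ?CG.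
have [k /andP[ke Sk] kmin] := ex_minnP exk.
have nSC C' : C' \in take k e -> ~~ straddles (pos t) p C'.
  move=> C'k; have k'_lt : (index C' (take k e) < k)%N.
    by have := index_mem C' (take k e); rewrite C'k size_take ke.
  apply: contraTN (k'_lt) => SC'; rewrite -leqNgt kmin // -(nth_take _ k'_lt) nth_index //.
  by rewrite SC' (ltn_trans k'_lt ke).
set C := nth set0 e k in Sk.
exists C; first by rewrite -mem_enum mem_nth.
rewrite Sk andbT /selected /greedy_merges index_uniq ?enum_uniq // -/e -/C.
case/existsP: Sk => i /andP[iC /existsP[j /andP[jC /andP[ip pj]]]].
apply/orP; right; apply/existsP; exists i; rewrite iC; apply/existsP; exists j.
rewrite jC; apply/negP => cij.
have := closed_connect (a := fun v => x t v 0 < p) (greedy_union_side t_gt0 nS nSC) cij.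
rewrite !unfold_in /= ip => /esym jp.
by have := lt_le_trans jp pj; rewrite ltxx.
Qed.

Lemma exists_selected_straddle p tc a b :
  (forall i j, connect (union_upto G tc) i j) -> x 0%N a 0 < p <= x 0%N b 0 ->
  exists2 k, k \in selected_pairs G tc & straddles (pos k.1) p k.2.
Proof.
move=> conn pab.
have [t /andP[t_le St] tmin] := ex_minnP (straddled_before conn pab).
have nS s : (s < t)%N -> ~~ straddled p s.
  move=> st; apply: contraTN (st) => Ss.
  by rewrite -leqNgt tmin // (leq_trans (ltnW st) t_le) Ss.
have [C CG /andP[selC SC]] := first_straddle_selected nS St.
by exists (Ordinal (t_le : (t < tc.+1)%N), C); rewrite // inE CG selC.
Qed.

Lemma spread_le_sum_selected_diam tc a b :
  (forall i j, connect (union_upto G tc) i j) ->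
  x 0%N b 0 - x 0%N a 0 <= \sum_(k in selected_pairs G tc) diam (pos k.1) k.2.
Proof.
move=> conn; pose top (k : 'I_tc.+1 * {set 'I_n}) := max_over (pos k.1) a k.2.
rewrite -big_enum (eq_bigr (fun k => top k - (top k - diam (pos k.1) k.2))) => [|k _].
  apply: interval_cover_le_sum => [k _|p ap pb]; first by rewrite lerBlDr lerDl diam_ge0.
  have [k kS Sk] := exists_selected_straddle conn (introT andP (conj ap pb)).
  by exists k; [rewrite mem_enum | exact: straddles_max_over].
by rewrite opprB addrC subrK.
Qed.

Lemma spread_sqr_le tc m a b :
  (forall i j, connect (union_upto G tc) i j) -> (ncomps (G 0) <= m)%N ->
  x 0%N a 0 <= x 0%N b 0 ->
  (x 0%N b 0 - x 0%N a 0) ^+ 2 <=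
    (2 * m)%:R * \sum_(t < tc.+1) \sum_(C in comps (G t)) diam (pos t) C ^+ 2.
Proof.
move=> conn ncm ab; pose D (k : 'I_tc.+1 * {set 'I_n}) := diam (pos k.1) k.2.
have spread := spread_le_sum_selected_diam a b conn.
apply: (@le_trans _ _ ((\sum_(k in selected_pairs G tc) D k) ^+ 2)).
  have spread_ge0 : 0 <= x 0%N b 0 - x 0%N a 0 by rewrite subr_ge0.
  by rewrite ler_sqr ?nnegrE // (le_trans spread_ge0 spread).
apply: le_trans (sqr_sum_le_card_mul_sum_sqr _ D) _.
apply: ler_pM.
- exact: ler0n.
- by apply: sumr_ge0 => k _; apply: sqr_ge0.
- by rewrite ler_nat (leq_trans (card_selected_pairs sG tc)) // leq_mul2l ncm orbT.
- apply: (@sum_selected_pairs_le _ G _ _ (fun t C => diam (pos t) C ^+ 2)) => t C.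
  exact: sqr_ge0.
Qed.

End Trajectory.

Theorem lemma8 (R : realFieldType) (n d m : nat) (h : R)
  (G : nat -> rel 'I_n) (x : nat -> 'cV[R]_n) (tc : nat) :
  0 < h ->
  (forall t, symmetric (G t)) ->
  (forall t, reflexive (G t)) ->
  (forall t (i : 'I_n), \sum_(j < n) adjmx R (G t) i j = d%:R) ->
  (forall t, cheeger_ge (G t) h) ->
  (forall t, (ncomps (G t) <= m)%N) ->
  (forall t, x t.+1 = d%:R^-1 *: (adjmx R (G t) *m x t)) ->
  is_last_merge G tc ->
  (forall i j, connect (union_upto G tc) i j) ->
  (2 * d * m * n)%:R^-1 *
    (\sum_(i < n) d%:R * (x 0%N i 0 - n%:R^-1 * \sum_(j < n) x 0%N j 0) ^+ 2)
  <= \sum_(t < tc.+1) \sum_(C in comps (G t)) diam (fun i => x t i 0) C ^+ 2.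
Proof.
move=> _ sG rG regG _ ncm step _ conn.
set RHS := \sum_(t < tc.+1) _.
have [N0|N_gt0] := posnP (2 * d * m * n).
  rewrite N0 invr0 mul0r; apply: sumr_ge0 => t _; apply: sumr_ge0 => C _; exact: sqr_ge0.
have n_gt0 : (0 < n)%N by move: N_gt0; rewrite muln_gt0 => /andP[].
pose i0 := Ordinal n_gt0; pose x0 i := x 0%N i 0.
pose a := [arg min_(i < i0) x0 i]%O; pose b := [arg max_(i > i0) x0 i]%O.
have x0_ab i : x0 a <= x0 i <= x0 b.
  rewrite /a /b; case: arg_minP => // a' _ a'_min; case: arg_maxP => // b' _ b'_max.
  by apply/andP; split; [exact: a'_min | exact: b'_max].
have ab : x0 a <= x0 b by case/andP: (x0_ab a).
have spread_sqr := spread_sqr_le sG rG regG step conn (ncm 0%N) ab.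
rewrite -mulr_sumr ler_pdivrMl ?ltr0n // !natrM -!mulrA mulrCA ler_wpM2l //.
have -> : 2 * (m%:R * (n%:R * RHS)) = n%:R * ((2 * m)%:R * RHS) :> R.
  by rewrite natrM; ring.
exact: le_trans (sum_sqr_sub_mean_le x0_ab) (ler_wpM2l (ler0n _ _) spread_sqr).
Qed.
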